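(* Let $S\ge2$, $\mathcal S=\{1,\dots,S\}$ and $T=3$. The union of the following two sets of moves is a Markov basis for the toric homogeneous Markov chain model on $\mathcal S^3$. (1) Crossing path swappings: for paths $\omega=(s_1,s_2,s_3)$, $\omega'=(s'_1,s'_2,s'_3)$ with $s_t=s'_t$ for some $t$, the move $e_\omega+e_{\omega'}-e_{\tilde\omega}-e_{\tilde\omega'}$ with $\tilde\omega=(s_1,\dots,s_t,s'_{t+1},\dots,s'_3)$, $\tilde\omega'=(s'_1,\dots,s'_t,s_{t+1},\dots,s_3)$. (2) The moves $\bar{\mathbf z}=\sum_{\omega\in W_1}e_\omega-\sum_{\omega\in W_2}e_\omega$, for all $m=2,\dots,S$, all distinct $i_1,\dots,i_m\in\mathcal S$, all distinct $j_1,\dots,j_m\in\mathcal S$, and all choices of states $s_j\in\mathcal S$ ($j\in\mathcal I\setminus\mathcal J$) and $\tilde s_j\in\mathcal S$ ($j\in\mathcal J\setminus\mathcal I$), where $\mathcal I=\{i_1,\dots,i_m\}$, $\mathcal J=\{j_1,\dots,j_m\}$ and, with indices taken cyclically ($j_0:=j_m$, $i_{m+1}:=i_1$): for $j=j_l\in\mathcal J$ put $i(j)=i_l$ and $i'(j)=i_{l+1}$; for $j=i_l\in\mathcal I$ put $k(j)=j_{l-1}$ and $k'(j)=j_l$; $$W_1=\{(i(j),j,k(j)):j\in\mathcal I\cap\mathcal J\}\cup\{(s_j,j,k(j)):j\in\mathcal I\setminus\mathcal J\}\cup\{(i(j),j,\tilde s_j):j\in\mathcal J\setminus\mathcal I\},$$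 $$W_2=\{(i'(j),j,k'(j)):j\in\mathcal I\cap\mathcal J\}\cup\{(s_j,j,k'(j)):j\in\mathcal I\setminus\mathcal J\}\cup\{(i'(j),j,\tilde s_j):j\in\mathcal J\setminus\mathcal I\}.$$
   Context: Paths are elements of $\mathcal S^3$; a contingency table is a function $\mathbf x:\mathcal S^3\to\mathbb Z_{\ge0}$, and $e_\omega$ is the table with a single path $\omega$. The toric homogeneous Markov chain model has sufficient statistic $\mathbf b(\mathbf x)=A\mathbf x$ consisting of initial-state counts $x^1_i=\sum_{\omega:\omega_1=i}x(\omega)$ and total transition counts $x^+_{ij}=\sum_\omega x(\omega)\,\#\{t\in\{1,2\}:\omega_t=i,\omega_{t+1}=j\}$. The fiber of $\mathbf b$ is the set of nonnegative integer tables $\mathbf x$ with $A\mathbf x=\mathbf b$; a move is an integer $\mathbf z$ with $A\mathbf z=0$. A set $\mathcal B$ of moves is a Markov basis if for every $\mathbf b$ and $\mathbf x,\mathbf y$ in the fiber of $\mathbf b$ there are $\mathbf z_1,\dots,\mathbf z_K\in\mathcal B\cup(-\mathcal B)$ with $\mathbf y=\mathbf x+\sum_k\mathbf z_k$ and all partial sums $\mathbf x+\sum_{k\le h}\mathbf z_k\ge0$. *)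

(* States are 'I_S (0-indexed: state k+1 of the paper is k). *)
From HB Require Import structures.
From mathcomp Require Import all_boot all_order all_algebra.
Set Implicit Arguments. Unset Strict Implicit. Unset Printing Implicit Defensive.
Import Order.TTheory GRing.Theory Num.Theory.
Local Open Scope ring_scope.

(* paths of length T = 3: omega t for t : 'I_3 (time t+1 of the paper) *)
Definition path (S : nat) := {ffun 'I_3 -> 'I_S}.
Definition table (S : nat) := {ffun path S -> int}.

Definition mk3 (S : nat) (a b c : 'I_S) : path S :=
  [ffun t : 'I_3 => nth a [:: a; b; c] t].

Definition e (S : nat) (w : path S) : table S := [ffun u => ((u == w) : nat)%:Z].

Definition ntrans (S : nat) (w : path S) (i j : 'I_S) : nat :=
  #|[set t : 'I_2 | (w (inord t) == i) && (w (inord t.+1) == j)]|.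

Definition init_count (S : nat) (z : table S) (i : 'I_S) : int :=
  \sum_(w : path S | w ord0 == i) z w.

Definition trans_count (S : nat) (z : table S) (i j : 'I_S) : int :=
  \sum_(w : path S) z w * (ntrans w i j)%:Z.

Definition stat (S : nat) (z : table S) :
  {ffun 'I_S -> int} * {ffun 'I_S * 'I_S -> int} :=
  ([ffun i => init_count z i], [ffun ij => trans_count z ij.1 ij.2]).

Definition in_fiber (S : nat) b (x : table S) : Prop :=
  (forall w, 0 <= x w) /\ stat x = b.

Definition is_move (S : nat) (z : table S) : Prop :=
  stat z = ([ffun _ => 0], [ffun _ => 0]).

Definition markov_basis (S : nat) (B : table S -> Prop) : Prop :=
  (forall z, B z -> is_move z) /\
  forall b (x y : table S), in_fiber b x -> in_fiber b y ->
    exists zs : seq (table S),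
      (forall z, z \in zs -> B z \/ B (- z)) /\
      y = x + \sum_(z <- zs) z /\
      (forall h : nat, (h <= size zs)%N -> forall w, 0 <= (x + \sum_(z <- take h zs) z) w).

Definition swap_path (S : nat) (w w' : path S) (t : 'I_3) : path S :=
  [ffun k : 'I_3 => if (k <= t)%N then w k else w' k].

Definition crossing_move (S : nat) (z : table S) : Prop :=
  exists (w w' : path S) (t : 'I_3), w t = w' t /\
    z = e w + e w' - e (swap_path w w' t) - e (swap_path w' w t).

(* (2) the moves zbar. ii l = i_{l+1}, jj l = j_{l+1} (0-indexed, cyclic);
   s j = s_j for j in I\J, st j = \tilde s_j for j in J\I (other values unused). *)
Section Zbar.
Variables (S m : nat) (ii jj : 'I_m -> 'I_S) (s st : 'I_S -> 'I_S).
Definition Iset : {set 'I_S} := [set ii l | l : 'I_m].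
Definition Jset : {set 'I_S} := [set jj l | l : 'I_m].
Definition prv (l : 'I_m) : 'I_m := ord_pred l.
Definition nxt (l : 'I_m) : 'I_m := ordS l.
(* ll = (l, l'), j = jj l = ii l' in I cap J: i(j) = ii l, i'(j) = ii (l+1), k(j) = jj (l'-1), k'(j) = jj l' *)
Definition W1 : {set path S} :=
  [set mk3 (ii ll.1) (jj ll.1) (jj (prv ll.2)) | ll : 'I_m * 'I_m & jj ll.1 == ii ll.2] :|:
  [set mk3 (s (ii l)) (ii l) (jj (prv l)) | l : 'I_m & ii l \notin Jset] :|:
  [set mk3 (ii l) (jj l) (st (jj l)) | l : 'I_m & jj l \notin Iset].
Definition W2 : {set path S} :=
  [set mk3 (ii (nxt ll.1)) (jj ll.1) (jj ll.2) | ll : 'I_m * 'I_m & jj ll.1 == ii ll.2] :|: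
  [set mk3 (s (ii l)) (ii l) (jj l) | l : 'I_m & ii l \notin Jset] :|:
  [set mk3 (ii (nxt l)) (jj l) (st (jj l)) | l : 'I_m & jj l \notin Iset].
Definition zbar : table S := \sum_(w in W1) e w - \sum_(w in W2) e w.
End Zbar.

Definition zbar_move (S : nat) (z : table S) : Prop :=
  exists (m : nat) (ii jj : 'I_m -> 'I_S) (s st : 'I_S -> 'I_S),
    (2 <= m)%N /\ (m <= S)%N /\ injective ii /\ injective jj /\
    z = zbar ii jj s st.

From HB Require Import structures.
From Pilot Require Import Defs.
From mathcomp Require Import all_boot all_order all_algebra.
From mathcomp Require Import zify.
Set Implicit Arguments. Unset Strict Implicit. Unset Printing Implicit Defensive.
Import Order.TTheory GRing.Theory Num.Theory.
Local Open Scope ring_scope.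

(* Two nonnegative tables in one fiber have the same initial counts and the same
   transition counts. Hence the difference D of their front margins (number of paths
   with (w_1, w_2) = (a, b)) has zero row and column sums, and their back margins
   (paths with (w_2, w_3) = (b, c)) differ by -D. If D = 0, all margins agree and the
   tables are joined by crossing swaps at time 2, each chosen so that the positive part
   of the difference decreases while the table stays nonnegative. If D <> 0, following
   positive entries of D along rows and negative ones along columns yields an
   alternating cycle i_1 j_1 i_2 j_2 ..., and the move zbar built on it changes D by
   exactly that cycle, which decreases the sum of the |D a b|. Before applying zbar,
   swaps (which preserve all margins) make every path it removes positive. *)

(* Importing mathcomp's [path] module shadows the [path] of Defs. *)
Local Notation path := Defs.path.
Local Notation ind b := (((b : bool) : nat)%:Z).

Lemma nonneg_measure_ind (T : Type) (f : T -> int) (P : T -> Prop) :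
  (forall x, 0 <= f x) -> (forall x, (forall y, f y < f x -> P y) -> P x) ->
  forall x, P x.
Proof.
move=> f_ge0 IH x; have [n] : exists n : nat, f x < n%:Z.
  by exists (absz (f x)).+1; have := f_ge0 x; lia.
elim: n x => [|n IHn] x fx_lt; first by have := f_ge0 x; lia.
by apply: IH => y fy_lt; apply: IHn; lia.
Qed.

Lemma ltr_sum_at (R : numDomainType) (I : finType) (P : pred I) (F G : I -> R) i0 :
  (forall i, P i -> F i <= G i) -> P i0 -> F i0 < G i0 ->
  \sum_(i | P i) F i < \sum_(i | P i) G i.
Proof.
move=> le_FG Pi0 lt0; rewrite (bigD1 i0 Pi0) [X in _ < X](bigD1 i0 Pi0) /= ltr_leD //.
by apply: ler_sum => i /andP[Pi _]; exact: le_FG.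
Qed.

Lemma sum_ind_at (T : finType) (K : {set T}) (P : pred T) t0 :
  \sum_(t in K) ind (P t && (t == t0)) = ind ((t0 \in K) && P t0).
Proof.
case: (boolP (t0 \in K)) => Kt0.
  rewrite (bigD1 t0) //= eqxx andbT big1 ?addr0 // => t /andP[_ /negbTE->].
  by rewrite andbF.
rewrite big1 // => t Kt; case: (eqVneq t t0) => [tt0|_]; last by rewrite andbF.
by rewrite -tt0 Kt in Kt0.
Qed.

Section Locate.
Variables (T : finType) (m : nat) (f : 'I_m -> T).

Definition locate (t : T) : option 'I_m := [pick l | f l == t].

Variant locate_spec t : option 'I_m -> Type :=
  | LocateSome l of t = f l : locate_spec t (Some l)
  | LocateNone of t \notin [set f l | l : 'I_m] : locate_spec t None.

Lemma locateP t : locate_spec t (locate t).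
Proof.
rewrite /locate; case: pickP => [l /eqP <-|none]; first exact: LocateSome.
by apply: LocateNone; apply/imsetP => -[l _ tl]; move: (none l); rewrite tl eqxx.
Qed.

Hypothesis f_inj : injective f.

Lemma locateE l : locate (f l) = Some l.
Proof. by case: locateP => [l' /f_inj ->|/imsetP[]]; last exists l. Qed.

Lemma sum_locate (h : 'I_m -> int) t :
  \sum_l ind (f l == t) * h l = if locate t is Some l then h l else 0.
Proof.
case: locateP => [l ->|nt].
  rewrite (bigD1 l) //= eqxx mul1r big1 ?addr0 // => l' nl'.
  by rewrite (inj_eq f_inj) (negbTE nl') mul0r.
rewrite big1 // => l _; case: eqVneq => [fl|_]; last by rewrite mul0r.
by case/imsetP: nt; exists l.
Qed.
End Locate.

(** * Alternating cycles *)

Lemma invariant_cycle (T : finType) (Q : pred T) (phi : T -> T) x0 :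
  Q x0 -> (forall x, Q x -> Q (phi x)) ->
  exists p (c : 'I_p -> T),
    [/\ (0 < p)%N, injective c, forall l, Q (c l) & forall l, c (ordS l) = phi (c l)].
Proof.
move=> Qx0 Qphi; have Qiter k x : Q x -> Q (iter k phi x) by elim: k => //= k IHk /IHk/Qphi.
have [k1 [k2 [lt12 eq12]]] : exists k1 k2, (k1 < k2)%N /\ iter k1 phi x0 = iter k2 phi x0.
  have /injectivePn[k1 [k2 nk eq12]] : ~~ injectiveb (fun k : 'I_#|T|.+1 => iter k phi x0).
    by apply/injectiveP => /leq_card; rewrite card_ord ltnn.
  case: (ltngtP k1 k2) => [lt|gt|/val_inj eqk]; [by exists k1, k2|by exists k2, k1|].
  by rewrite eqk eqxx in nk.
set y := iter k1 phi x0.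
have : exists p, (0 < p)%N && (iter p phi y == y).
  by exists (k2 - k1)%N; rewrite subn_gt0 lt12 /y -iterD (subnK (ltnW lt12)) eq12 eqxx.
case/ex_minnP=> p /andP[p_gt0 /eqP yp] p_min.
exists p, (fun l : 'I_p => iter l phi y); split=> // [l1 l2 /= eq_l|l|l].
- wlog lt_l : l1 l2 eq_l / (l1 < l2)%N.
    move=> W; case: (ltngtP l1 l2) => [|gt|/val_inj //]; first exact: W.
    exact/esym/(W _ _ (esym eq_l)).
  have : (p <= p - l2 + l1)%N.
    apply: p_min; rewrite addn_gt0 subn_gt0 ltn_ord /=.
    by rewrite iterD eq_l -iterD subnK ?yp // ltnW.
  by have := ltn_ord l2; lia.
- by rewrite /y -iterD; apply: Qiter.
rewrite /= -iterS {2}(divn_eq l.+1 p) addnC iterD iterM.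
by rewrite (iter_fix _ yp).
Qed.

Lemma sum_eq0_neg (R : realDomainType) (I : finType) (F : I -> R) i0 :
  \sum_i F i = 0 -> 0 < F i0 -> exists i, F i < 0.
Proof.
move=> sum0 Fi0_gt0; case: (pickP (fun i => F i < 0)) => [i|none]; first by exists i.
have F_ge0 i : 0 <= F i by rewrite leNgt; apply/negbT/none.
by move: Fi0_gt0; rewrite (psumr_eq0P (fun i _ => F_ge0 i) sum0) ?ltxx.
Qed.

Lemma sum_gt0P (R : realDomainType) (I : finType) (F : I -> R) :
  0 < \sum_i F i -> exists i, 0 < F i.
Proof.
move=> sum_gt0; case: (pickP (fun i => 0 < F i)) => [i|none]; first by exists i.
suff : \sum_i F i <= 0 by rewrite leNgt sum_gt0.
by apply: sumr_le0 => i _; rewrite leNgt; apply/negbT/none.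
Qed.

Lemma alternating_cycle (R : realDomainType) (I J : finType) (D : I -> J -> R) a0 b0 :
  (forall a, \sum_b D a b = 0) -> (forall b, \sum_a D a b = 0) -> 0 < D a0 b0 ->
  exists m (ii : 'I_m -> I) (jj : 'I_m -> J),
    [/\ (2 <= m)%N, injective ii, injective jj,
        forall l, 0 < D (ii l) (jj l) & forall l, D (ii (ordS l)) (jj l) < 0].
Proof.
move=> row0 col0 D0_gt0.
pose f a := odflt b0 [pick b | 0 < D a b]; pose g b := odflt a0 [pick a | D a b < 0].
have fP a b : 0 < D a b -> 0 < D a (f a).
  by move=> Dab; rewrite /f; case: pickP => // /(_ b); rewrite /= Dab.
have gP a : 0 < D a (f a) -> D (g (f a)) (f a) < 0.
  move=> /(sum_eq0_neg (col0 _))[a' Da'].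
  by rewrite /g; case: pickP => // /(_ a'); rewrite /= Da'.
have Qphi a : 0 < D a (f a) -> 0 < D (g (f a)) (f (g (f a))).
  move=> /gP Dneg; case: (@sum_eq0_neg _ _ (fun b => - D (g (f a)) b) (f a)) => [||b].
  - by rewrite sumrN row0 oppr0.
  - by rewrite oppr_gt0.
  by rewrite oppr_lt0; exact: fP.
have [p [c [p_gt0 c_inj Qc cS]]] := invariant_cycle (fP _ _ D0_gt0) Qphi.
exists p, c, (f \o c); split=> // [|l1 l2 /= eq_f|l].
- rewrite ltnNge; apply/negP => p_le1; pose l := Ordinal p_gt0.
  have lS : ordS l = l by apply: val_inj; rewrite /= (_ : p = 1%N) //; lia.
  by have := gP _ (Qc l); rewrite -cS lS ltNge ltW ?Qc.
- by apply: (@ordS_inj p); apply: c_inj; rewrite !cS eq_f.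
- by rewrite cS; exact: gP.
Qed.

(** * Tables, margins and walks *)

Section Tables.
Variable S : nat.
Implicit Types (x y z : table S) (w v : path S) (a b c : 'I_S).

Definition mass (P : pred (path S)) x : int := \sum_(w | P w) x w.
Arguments mass : simpl never.

Lemma mass_is_zmod_morphism P : zmod_morphism (mass P).
Proof. by move=> x y; rewrite /mass -sumrB; apply: eq_bigr => w _; rewrite !ffunE. Qed.

HB.instance Definition _ P :=
  GRing.isZmodMorphism.Build (table S) int (mass P) (mass_is_zmod_morphism P).

Lemma mass_e P v : mass P (e v) = ind (P v).
Proof.
rewrite /mass; under eq_bigr do rewrite ffunE.
case Pv: (P v); last by rewrite big1 // => w Pw; case: eqP => // wv; rewrite -wv Pw in Pv.
by rewrite (bigD1 v) //= eqxx big1 ?addr0 // => w /andP[_ /negbTE ->].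
Qed.

Lemma mass_ge0 P x : (forall w, 0 <= x w) -> 0 <= mass P x.
Proof. by move=> x_ge0; apply: sumr_ge0. Qed.

Lemma mass_gt0P P x : 0 < mass P x -> exists2 w, P w & 0 < x w.
Proof.
move=> mass_gt0; case: (pickP (fun w => P w && (0 < x w))) => [w /andP[]|none].
  by exists w.
suff : mass P x <= 0 by rewrite leNgt mass_gt0.
by apply: sumr_le0 => w Pw; move: (none w); rewrite /= Pw /= => /negbT; rewrite -leNgt.
Qed.

Lemma mass_subset (P Q : pred (path S)) x :
  (forall w, 0 <= x w) -> {subset P <= Q} -> mass P x <= mass Q x.
Proof.
move=> x_ge0 PQ; rewrite /mass [X in _ <= X]big_mkcond [X in X <= _]big_mkcond.
apply: ler_sum => w _; case: ifP => [Pw|_]; first by rewrite (ifT _ _ (PQ w Pw)).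
by case: ifP => // _; exact: x_ge0.
Qed.

Lemma mass_partition (f : path S -> 'I_S) P x :
  \sum_a mass (fun w => P w && (f w == a)) x = mass P x.
Proof. by rewrite /mass (partition_big f xpredT). Qed.

Lemma mass_eq_lt P x y w0 :
  mass P x = mass P y -> P w0 -> y w0 < x w0 -> exists2 w, P w & x w < y w.
Proof.
move=> eq_mass Pw0 lt0; case: (pickP (fun w => P w && (x w < y w))) => [w /andP[]|none].
  by exists w.
suff : mass P y < mass P x by rewrite eq_mass ltxx.
apply: (ltr_sum_at _ Pw0 lt0) => w Pw.
by move: (none w); rewrite /= Pw /= => /negbT; rewrite -leNgt.
Qed.

Definition o0 : 'I_3 := ord0.
Definition o1 : 'I_3 := @Ordinal 3 1 isT.
Definition o2 : 'I_3 := @Ordinal 3 2 isT.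

Lemma mk3_o0 a b c : mk3 a b c o0 = a. Proof. by rewrite ffunE. Qed.
Lemma mk3_o1 a b c : mk3 a b c o1 = b. Proof. by rewrite ffunE. Qed.
Lemma mk3_o2 a b c : mk3 a b c o2 = c. Proof. by rewrite ffunE. Qed.

Lemma mk3_eta w : w = mk3 (w o0) (w o1) (w o2).
Proof.
by apply/ffunP => -[[|[|[|t]]] lt_t]; rewrite ffunE //=; congr (w _); apply: val_inj.
Qed.

Lemma mk3_eqE a b c a' b' c' :
  (mk3 a b c == mk3 a' b' c') = [&& a == a', b == b' & c == c'].
Proof.
apply/eqP/and3P => [E|[/eqP-> /eqP-> /eqP->] //].
have := congr1 (fun w => (w o0, w o1, w o2)) E.
by rewrite /= !mk3_o0 !mk3_o1 !mk3_o2 => -[-> -> ->].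
Qed.

Definition start a : pred (path S) := fun w => w o0 == a.
Definition through b : pred (path S) := fun w => w o1 == b.
Definition front a b : pred (path S) := fun w => (w o0 == a) && (w o1 == b).
Definition back b c : pred (path S) := fun w => (w o1 == b) && (w o2 == c).

Lemma front_self w : front (w o0) (w o1) w.
Proof. by rewrite /front !eqxx. Qed.

Lemma back_self w : back (w o1) (w o2) w.
Proof. by rewrite /back !eqxx. Qed.

Lemma init_countE x a : init_count x a = mass (start a) x.
Proof. by []. Qed.

Lemma trans_countE x a b : trans_count x a b = mass (front a b) x + mass (back a b) x.
Proof.
rewrite /trans_count /mass [X in _ = X + _]big_mkcond [X in _ = _ + X]big_mkcond -big_split.
apply: eq_bigr => w _ /=; rewrite /ntrans cardsE -sum1_card big_mkcond !big_ord_recl big_ord0.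
rewrite /= !unfold_in /= /bump /=.
have -> : inord 0 = o0 by apply: val_inj; rewrite /= inordK.
have -> : inord 1 = o1 by apply: val_inj; rewrite /= inordK.
have -> : inord 2 = o2 by apply: val_inj; rewrite /= inordK.
by rewrite /front /back /=; do 2!case: (_ && _); lia.
Qed.

Lemma sum_front_row x a : \sum_b mass (front a b) x = mass (start a) x.
Proof. exact: (mass_partition (fun w => w o1)). Qed.

Lemma sum_front_col x b : \sum_a mass (front a b) x = mass (through b) x.
Proof.
rewrite -(mass_partition (fun w => w o0)); apply: eq_bigr => a _.
by apply: eq_bigl => w; rewrite andbC.
Qed.

Lemma sum_back_row x b : \sum_c mass (back b c) x = mass (through b) x.
Proof. exact: (mass_partition (fun w => w o2)). Qed.

Lemma is_moveP z : is_move z <->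
  (forall a b, mass (front a b) z + mass (back a b) z = 0) /\
  (forall a, \sum_b mass (front a b) z = 0).
Proof.
rewrite /is_move /stat; split=> [[/ffunP init0 /ffunP trans0]|[trans0 init0]].
  split=> [a b|a]; first by move: (trans0 (a, b)); rewrite !ffunE trans_countE.
  by move: (init0 a); rewrite !ffunE sum_front_row.
congr pair; apply/ffunP; first by move=> a; rewrite !ffunE init_countE -sum_front_row.
by move=> [a b]; rewrite !ffunE trans_countE.
Qed.

Lemma stat_eq_move x y : stat x = stat y <-> is_move (y - x).
Proof.
rewrite is_moveP /stat; split=> [[/ffunP init_eq /ffunP trans_eq]|[trans0 init0]].
  split=> [a b|a].
    by move: (trans_eq (a, b)); rewrite !ffunE !trans_countE !raddfB /=; lia.
  by move: (init_eq a); rewrite !ffunE !init_countE sum_front_row raddfB /=; lia.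
congr pair; apply/ffunP => a; rewrite !ffunE; apply/eqP; rewrite eq_sym -subr_eq0.
  by rewrite !init_countE -!raddfB /= -sum_front_row init0.
by rewrite !trans_countE opprD addrACA -!raddfB /= trans0.
Qed.

Lemma stat_addr_move x z : is_move z -> stat (x + z) = stat x.
Proof. by move=> z_move; apply/esym/stat_eq_move; rewrite addrAC subrr add0r. Qed.

Lemma stat_eq_margins x y :
  (forall a b, mass (front a b) x = mass (front a b) y) ->
  (forall b c, mass (back b c) x = mass (back b c) y) -> stat x = stat y.
Proof.
move=> front_eq back_eq; apply/stat_eq_move/is_moveP.
split=> [a b|a]; first by rewrite !raddfB /= front_eq back_eq !subrr.
by rewrite big1 // => b _; rewrite raddfB /= front_eq subrr.
Qed.

Lemma move_front_margins z : is_move z ->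
  [/\ forall a, \sum_b mass (front a b) z = 0,
      forall b, \sum_a mass (front a b) z = 0 &
      forall a b, mass (back a b) z = - mass (front a b) z].
Proof.
move=> /is_moveP[trans0 row0].
have back_front a b : mass (back a b) z = - mass (front a b) z.
  by apply/eqP; rewrite -addr_eq0 addrC trans0.
split=> // b; rewrite sum_front_col -sum_back_row.
by under eq_bigr do rewrite back_front; rewrite sumrN row0 oppr0.
Qed.

Definition walk (B : table S -> Prop) x y : Prop :=
  exists zs : seq (table S),
    (forall z, z \in zs -> B z \/ B (- z)) /\
    y = x + \sum_(z <- zs) z /\
    (forall h : nat, (h <= size zs)%N -> forall w, 0 <= (x + \sum_(z <- take h zs) z) w).

Lemma walk_refl B x : (forall w, 0 <= x w) -> walk B x x.
Proof. by move=> x_ge0; exists [::]; do !split=> // *; rewrite big_nil addr0. Qed.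

Lemma walk_trans B x y u : walk B x y -> walk B y u -> walk B x u.
Proof.
move=> [zs1 [B1 [-> nonneg1]]] [zs2 [B2 [-> nonneg2]]]; exists (zs1 ++ zs2).
split; last split.
- by move=> z; rewrite mem_cat => /orP[/B1|/B2].
- by rewrite big_cat addrA.
move=> h le_h w; rewrite take_cat; case: ltnP => [lt_h|le_h1].
  by apply: nonneg1; exact: ltnW.
by rewrite big_cat addrA; apply: nonneg2; rewrite leq_subLR -size_cat.
Qed.

Lemma walk_move B x z : B z -> (forall w, 0 <= x w) -> (forall w, 0 <= (x + z) w) ->
  walk B x (x + z).
Proof.
move=> Bz x_ge0 xz_ge0; exists [:: z]; split; [|split] => [z'|| [|[|h]] //= _ w].
- by rewrite inE => /eqP->; left.
- by rewrite big_seq1.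
- by rewrite big_nil addr0.
- by rewrite big_seq1.
Qed.

Definition swap_move a b c a' c' : table S :=
  e (mk3 a b c) + e (mk3 a' b c') - e (mk3 a b c') - e (mk3 a' b c).

Section SwapMove.
Variables a b c a' c' : 'I_S.

Lemma swap_move_crossing : crossing_move (swap_move a b c a' c').
Proof.
exists (mk3 a b c), (mk3 a' b c'), o1; split; first by rewrite !mk3_o1.
have swapE p q r p' r' : swap_path (mk3 p q r) (mk3 p' q r') o1 = mk3 p q r'.
  by apply/ffunP => -[[|[|[|t]]] lt_t]; rewrite !ffunE.
by rewrite /swap_move !swapE.
Qed.

Lemma mass_front_swap p q : mass (front p q) (swap_move a b c a' c') = 0.
Proof.
rewrite !raddfB raddfD /= !mass_e /front !mk3_o0 !mk3_o1.
by case: (a == p); case: (a' == p); case: (b == q); lia.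
Qed.

Lemma mass_back_swap q r : mass (back q r) (swap_move a b c a' c') = 0.
Proof.
rewrite !raddfB raddfD /= !mass_e /back !mk3_o1 !mk3_o2.
by case: (c == r); case: (c' == r); case: (b == q); lia.
Qed.

Lemma swap_move_is_move : is_move (swap_move a b c a' c').
Proof.
apply/is_moveP; split=> [p q|p]; first by rewrite mass_front_swap mass_back_swap addr0.
by rewrite big1 // => q _; exact: mass_front_swap.
Qed.

Lemma swap_move_off w : w o1 != b -> swap_move a b c a' c' w = 0.
Proof.
move=> wb; rewrite !ffunE [w]mk3_eta !mk3_eqE.
by rewrite (negbTE wb) !andbF.
Qed.

Hypotheses (aa' : a != a') (cc' : c != c').

Lemma swap_move_at : swap_move a b c a' c' (mk3 a b c) = 1.
Proof. by rewrite !ffunE !mk3_eqE !eqxx (negbTE aa') (negbTE cc'). Qed.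

Lemma swap_move_cases w : 0 <= swap_move a b c a' c' w \/
  swap_move a b c a' c' w = -1 /\ (w = mk3 a b c' \/ w = mk3 a' b c).
Proof.
rewrite !ffunE; have a'a : a' != a by rewrite eq_sym.
have c'c : c' != c by rewrite eq_sym.
case: (eqVneq w (mk3 a b c')) => [->|wac'].
  by right; rewrite !mk3_eqE !eqxx (negbTE aa') (negbTE c'c); split=> //; left.
case: (eqVneq w (mk3 a' b c)) => [->|wa'c].
  by right; rewrite !mk3_eqE !eqxx (negbTE a'a) (negbTE cc'); split=> //; right.
by left; case: (w == _); case: (w == _).
Qed.

End SwapMove.

Lemma crossing_is_move z : crossing_move z -> is_move z.
Proof.
move=> [w [w' [t [wt ->]]]]; rewrite [w]mk3_eta [w']mk3_eta in wt *.
move: (w o0) (w o1) (w o2) (w' o0) (w' o1) (w' o2) wt => p q r p' q' r' wt.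
have swapE (p1 q1 r1 p2 q2 r2 : 'I_S) :
  [/\ swap_path (mk3 p1 q1 r1) (mk3 p2 q2 r2) o0 = mk3 p1 q2 r2,
      swap_path (mk3 p1 q1 r1) (mk3 p2 q2 r2) o1 = mk3 p1 q1 r2 &
      swap_path (mk3 p1 q1 r1) (mk3 p2 q2 r2) o2 = mk3 p1 q1 r1].
  by split; apply/ffunP => -[[|[|[|k]]] lt_k]; rewrite !ffunE.
move: wt; have [->|[->|->]] : t = o0 \/ t = o1 \/ t = o2.
  by case: t => -[|[|[|k]]] lt_t //; [left|right; left|right; right]; apply: val_inj.
- rewrite !mk3_o0 => <-; case: (swapE p q r p q' r') => -> _ _.
  by case: (swapE p q' r' p q r) => -> _ _; rewrite addrK; apply/stat_eq_move.
- rewrite !mk3_o1 => <-; case: (swapE p q r p' q r') => _ -> _.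
  by case: (swapE p' q r' p q r) => _ -> _; exact: swap_move_is_move.
- move=> _; case: (swapE p q r p' q' r') => _ _ ->.
  by case: (swapE p' q' r' p q r) => _ _ ->; rewrite addrAC addrK; apply/stat_eq_move.
Qed.

Definition excess x y : int := \sum_w Num.max (y w - x w) 0.

Lemma excess_ge0 x y : 0 <= excess x y.
Proof. by apply: sumr_ge0 => w _; rewrite le_max lexx orbT. Qed.

Section CrossingStep.
Variables x y : table S.
Hypotheses (x_ge0 : forall w, 0 <= x w) (y_ge0 : forall w, 0 <= y w).
Hypothesis front_eq : forall a b, mass (front a b) x = mass (front a b) y.
Hypothesis back_eq : forall b c, mass (back b c) x = mass (back b c) y.

Lemma exists_deficit : x != y -> exists w, x w < y w.
Proof.
move=> /eqP neq_xy; case: (pickP (fun w => x w != y w)) => [w0 /= neq0|same]; last first.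
  by case: neq_xy; apply/ffunP => w; apply/eqP/negbFE/same.
case: (ltrgtP (x w0) (y w0)) neq0 => // [lt0|gt0] _; first by exists w0.
have [w _ lt] := mass_eq_lt (front_eq (w0 o0) (w0 o1)) (front_self w0) gt0.
by exists w.
Qed.

Lemma crossing_step : x != y -> exists a b c a' c',
  (forall w, 0 <= (x + swap_move a b c a' c') w) /\
  excess (x + swap_move a b c a' c') y < excess x y.
Proof.
(* w is in deficit; w1 (same front as w) and w2 (same back as w) are in surplus, and
   the swap lowers both of them while raising w. *)
move=> /exists_deficit[w lt_w]; set a := w o0; set b := w o1; set c := w o2.
have [w1 /andP[/eqP w1a /eqP w1b] lt1] :=
  mass_eq_lt (esym (front_eq a b)) (front_self w) lt_w.
have [w2 /andP[/eqP w2b /eqP w2c] lt2] :=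
  mass_eq_lt (esym (back_eq b c)) (back_self w) lt_w.
set c' := w1 o2; set a' := w2 o0.
have w1E : w1 = mk3 a b c' by rewrite [w1]mk3_eta w1a w1b.
have w2E : w2 = mk3 a' b c by rewrite [w2]mk3_eta w2b w2c.
have wE : w = mk3 a b c := mk3_eta w.
have cc' : c != c' by apply: contraTneq lt1 => cc'; rewrite w1E -cc' -wE -leNgt ltW.
have aa' : a != a' by apply: contraTneq lt2 => aa'; rewrite w2E -aa' -wE -leNgt ltW.
have sw_neg v :
  swap_move a b c a' c' v = -1 -> v = mk3 a b c' \/ v = mk3 a' b c -> y v < x v.
  by move=> _ [->|->]; rewrite -?w1E -?w2E.
exists a, b, c, a', c'; split=> // [v|].
  rewrite ffunE; case: (swap_move_cases b aa' cc' v) => [|[sv /(sw_neg v sv)]].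
    exact: addr_ge0.
  (* lia treats the two elaborations of [x v] produced by ffunE as distinct atoms. *)
  rewrite sv; have := y_ge0 v; move: (x v) (y v) => xv yv; lia.
apply: (ltr_sum_at _ (i0 := w)) => // [v _|]; last first.
  rewrite ffunE [in swap_move _ _ _ _ _ w]wE swap_move_at //.
  by move: (x w) (y w) lt_w => xw yw; lia.
rewrite ffunE; case: (swap_move_cases b aa' cc' v) => [|[sv /(sw_neg v sv)]].
  move: (swap_move a b c a' c' v) (x v) (y v) => sv xv yv; lia.
rewrite sv; move: (x v) (y v) => xv yv; lia.
Qed.
End CrossingStep.

Lemma crossing_walk (B : table S -> Prop) x y :
  (forall z, crossing_move z -> B z) ->
  (forall w, 0 <= x w) -> (forall w, 0 <= y w) ->
  (forall a b, mass (front a b) x = mass (front a b) y) ->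
  (forall b c, mass (back b c) x = mass (back b c) y) -> walk B x y.
Proof.
move=> crossingB + y_ge0; move: x.
apply: (nonneg_measure_ind (f := excess^~ y)) => [x|x IH x_ge0 front_eq back_eq].
  exact: excess_ge0.
have [<-|neq_xy] := eqVneq x y; first exact: walk_refl.
have [a [b [c [a' [c' [xz_ge0 lt_excess]]]]]] :=
  crossing_step x_ge0 y_ge0 front_eq back_eq neq_xy.
apply: walk_trans (walk_move _ x_ge0 xz_ge0) (IH _ lt_excess xz_ge0 _ _).
- exact/crossingB/swap_move_crossing.
- by move=> p q; rewrite raddfD /= mass_front_swap addr0.
- by move=> p q; rewrite raddfD /= mass_back_swap addr0.
Qed.

(** * The moves zbar *)

Section Zbar.
Variables (m : nat) (ii jj : 'I_m -> 'I_S) (s st : 'I_S -> 'I_S).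
Hypotheses (ii_inj : injective ii) (jj_inj : injective jj).

(* W1 and W2 each contain exactly one path through every middle state b in I \cup J,
   namely zpath id prv b and zpath nxt id b respectively. *)
Definition zfront (p : 'I_m -> 'I_m) b := if locate jj b is Some l then ii (p l) else s b.
Definition zback (q : 'I_m -> 'I_m) b := if locate ii b is Some l then jj (q l) else st b.
Definition zpath p q b := mk3 (zfront p b) b (zback q b).

Lemma in_Iset l : ii l \in Iset ii. Proof. exact: imset_f. Qed.
Lemma in_Jset l : jj l \in Jset jj. Proof. exact: imset_f. Qed.

Lemma zpath_set p q :
  [set mk3 (ii (p ll.1)) (jj ll.1) (jj (q ll.2)) | ll : 'I_m * 'I_m & jj ll.1 == ii ll.2] :|:
  [set mk3 (s (ii l)) (ii l) (jj (q l)) | l : 'I_m & ii l \notin Jset jj] :|: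
  [set mk3 (ii (p l)) (jj l) (st (jj l)) | l : 'I_m & jj l \notin Iset ii] =
  [set zpath p q b | b in Iset ii :|: Jset jj].
Proof.
apply/setP => w; rewrite !inE; apply/idP/imsetP.
- case/orP=> [/orP[|]|] /imsetP[].
  + move=> [l l']; rewrite inE /= => /eqP jl ->; exists (jj l); first by rewrite inE in_Jset orbT.
    by rewrite /zpath /zfront /zback locateE // jl locateE.
  + move=> l; rewrite inE => nJ ->; exists (ii l); first by rewrite inE in_Iset.
    rewrite /zpath /zfront /zback locateE //.
    by case: (locateP jj (ii l)) nJ => [l' ->|//]; rewrite in_Jset.
  + move=> l; rewrite inE => nI ->; exists (jj l); first by rewrite inE in_Jset orbT.
    rewrite /zpath /zfront /zback locateE //.
    by case: (locateP ii (jj l)) nI => [l' ->|//]; rewrite in_Iset.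
- case=> b + ->; rewrite inE /zpath /zfront /zback.
  case: (locateP jj b) => [l ->|nJ]; case: (locateP ii) => [l' jl|nI].
  + move=> _; apply/orP; left; apply/orP; left.
    by apply/imsetP; exists (l, l'); rewrite ?inE /= jl.
  + by move=> _; apply/orP; right; apply/imsetP; exists l; rewrite ?inE.
  + move=> _; apply/orP; left; apply/orP; right.
    by apply/imsetP; exists l'; rewrite ?inE -?jl.
  + by rewrite (negbTE nI) (negbTE nJ).
Qed.

Local Notation K := (Iset ii :|: Jset jj).

Lemma W1E : W1 ii jj s st = [set zpath (fun l => l) (@prv m) b | b in K].
Proof. exact: zpath_set. Qed.

Lemma W2E : W2 ii jj s st = [set zpath (@nxt m) (fun l => l) b | b in K].
Proof. exact: zpath_set. Qed.

Lemma zbarE : zbar ii jj s st =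
  \sum_(b in K) e (zpath (fun l => l) (@prv m) b) -
  \sum_(b in K) e (zpath (@nxt m) (fun l => l) b).
Proof.
have zpath_inj p q : injective (zpath p q).
  by move=> b1 b2 /(congr1 (fun w => w o1)); rewrite !mk3_o1.
by rewrite /zbar W1E W2E !big_imset // => b1 b2 _ _ /zpath_inj.
Qed.

Definition cycle_matrix a b : int :=
  \sum_l ind (jj l == b) * (ind (ii l == a) - ind (ii (nxt l) == a)).

Lemma cycle_matrixE a b : cycle_matrix a b =
  if locate jj b is Some l then ind (ii l == a) - ind (ii (nxt l) == a) else 0.
Proof. exact: sum_locate. Qed.

Lemma mass_front_zbar a b : mass (front a b) (zbar ii jj s st) = cycle_matrix a b.
Proof.
rewrite zbarE raddfB !(raddf_sum (mass _)) /=.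
under eq_bigr do rewrite mass_e /front mk3_o0 mk3_o1.
under [X in _ - X]eq_bigr do rewrite mass_e /front mk3_o0 mk3_o1.
rewrite !(sum_ind_at _ (fun b => zfront _ b == a)) cycle_matrixE /zfront.
by case: locateP => [l ->|_]; rewrite ?subrr // inE in_Jset orbT.
Qed.

Lemma mass_back_zbar b c : mass (back b c) (zbar ii jj s st) = - cycle_matrix b c.
Proof.
rewrite zbarE raddfB !(raddf_sum (mass _)) /=.
under eq_bigr do rewrite mass_e /back mk3_o1 mk3_o2 andbC.
under [X in _ - X]eq_bigr do rewrite mass_e /back mk3_o1 mk3_o2 andbC.
rewrite !(sum_ind_at _ (fun b => zback _ b == c)).
have -> : ind ((b \in K) && (zback (@prv m) b == c)) -
           ind ((b \in K) && (zback (fun l => l) b == c)) =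
         \sum_l ind (ii l == b) * (ind (jj (prv l) == c) - ind (jj l == c)).
  by rewrite sum_locate // /zback; case: locateP => [l ->|_]; rewrite ?subrr // inE in_Iset.
rewrite /cycle_matrix -sumrN; under [RHS]eq_bigr do rewrite mulrBr opprB.
under [LHS]eq_bigr do rewrite mulrBr.
rewrite !sumrB (reindex_inj (@ordS_inj m)) /=.
by congr (_ - _); apply: eq_bigr => l _; rewrite /prv ?ordSK mulrC.
Qed.

Lemma zbar_is_move : is_move (zbar ii jj s st).
Proof.
apply/is_moveP; split=> [a b|a]; first by rewrite mass_front_zbar mass_back_zbar subrr.
under eq_bigr do rewrite mass_front_zbar.
rewrite /cycle_matrix exchange_big /=.
have sum_col (l : 'I_m) (x : int) : \sum_b ind (jj l == b) * x = x.
  rewrite (bigD1 (jj l)) //= eqxx mul1r big1 ?addr0 // => b.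
  by rewrite eq_sym => /negbTE->; rewrite mul0r.
under eq_bigr do rewrite sum_col.
by rewrite sumrB (reindex_inj (@ordS_inj m)) subrr.
Qed.

Lemma nxt_neq (l : 'I_m) : (2 <= m)%N -> nxt l != l.
Proof.
move=> m_ge2; apply/eqP => /(congr1 val) /=; have := ltn_ord l.
by case: (ltngtP l.+1 m) => [lt|//|eq]; [rewrite modn_small //; lia | rewrite eq modnn; lia].
Qed.

Lemma cycle_matrix_at (l : 'I_m) : (2 <= m)%N -> cycle_matrix (ii l) (jj l) = 1.
Proof.
move=> m_ge2; rewrite cycle_matrixE locateE // eqxx.
by rewrite (inj_eq ii_inj) (negbTE (nxt_neq l m_ge2)).
Qed.

Lemma cycle_matrix_le (D : 'I_S -> 'I_S -> int) a b : (2 <= m)%N ->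
  (forall l, 0 < D (ii l) (jj l)) -> (forall l, D (ii (nxt l)) (jj l) < 0) ->
  `|D a b - cycle_matrix a b| <= `|D a b|.
Proof.
move=> m_ge2 D_gt0 D_lt0; rewrite cycle_matrixE.
case: locateP => [l ->|_]; last by rewrite subr0.
have := nxt_neq l m_ge2; rewrite -(inj_eq ii_inj).
case: (eqVneq (ii l) a) => [<- /negbTE->|_]; first by have := D_gt0 l; lia.
case: (eqVneq (ii (nxt l)) a) => [<- _|_ _]; first by have := D_lt0 l; lia.
by rewrite subrr subr0.
Qed.

End Zbar.

Lemma front_gt0P x a b : 0 < mass (front a b) x -> exists c, 0 < x (mk3 a b c).
Proof. by case/mass_gt0P => w /andP[/eqP<- /eqP<-]; exists (w o2); rewrite -mk3_eta. Qed.

Lemma back_gt0P x b c : 0 < mass (back b c) x -> exists a, 0 < x (mk3 a b c).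
Proof. by case/mass_gt0P => w /andP[/eqP<- /eqP<-]; exists (w o0); rewrite -mk3_eta. Qed.

Lemma swaps_make_positive x (K : pred 'I_S) (pa pc : 'I_S -> 'I_S) :
  (forall w, 0 <= x w) ->
  (forall b, K b -> 0 < mass (front (pa b) b) x) ->
  (forall b, K b -> 0 < mass (back b (pc b)) x) ->
  exists u : table S,
    [/\ forall w, 0 <= u w, forall a b, mass (front a b) u = mass (front a b) x,
        forall b c, mass (back b c) u = mass (back b c) x &
        forall b, K b -> 0 < u (mk3 (pa b) b (pc b))].
Proof.
move=> x_ge0 front_gt0 back_gt0.
have /fin_all_exists[cpos cposP] b : exists c, K b -> 0 < x (mk3 (pa b) b c).
  by case: (boolP (K b)) => [/front_gt0/front_gt0P[c]|]; [exists c | exists b].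
have /fin_all_exists[apos aposP] b : exists a, K b -> 0 < x (mk3 a b (pc b)).
  by case: (boolP (K b)) => [/back_gt0/back_gt0P[a]|]; [exists a | exists b].
(* For each middle state b whose target path is empty, one swap through b fills it;
   swaps through different middle states touch disjoint paths. *)
pose empty b := K b && (x (mk3 (pa b) b (pc b)) == 0).
have distinct b : empty b -> pa b != apos b /\ pc b != cpos b.
  case/andP=> Kb /eqP x0; split; apply: contraTneq (Kb) => eq_b.
    by move/aposP: Kb; rewrite -eq_b x0 ltxx.
  by move/cposP: Kb; rewrite -eq_b x0 ltxx.
pose fix_at b := if empty b then swap_move (pa b) b (pc b) (apos b) (cpos b) else 0.
have uE w : (x + \sum_b fix_at b) w = x w + fix_at (w o1) w.
  rewrite ffunE sum_ffunE (bigD1 (w o1)) //= big1 ?addr0 // => b /negbTE wb.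
  by rewrite /fix_at; case: ifP => _; [apply: swap_move_off; rewrite eq_sym wb | rewrite ffunE].
have fix_front b p q : mass (front p q) (fix_at b) = 0.
  by rewrite /fix_at; case: ifP => _; [exact: mass_front_swap | exact: raddf0].
have fix_back b q r : mass (back q r) (fix_at b) = 0.
  by rewrite /fix_at; case: ifP => _; [exact: mass_back_swap | exact: raddf0].
exists (x + \sum_b fix_at b); split.
- move=> w; rewrite uE /fix_at; set b := w o1; case: ifP => [empty_b|_]; last first.
    by rewrite ffunE addr0.
  have [aa' cc'] := distinct _ empty_b; have Kb := (andP empty_b).1.
  case: (swap_move_cases b aa' cc' w) => [|[-> [wE|wE]]]; first by move=> ?; apply: addr_ge0.
    by have := cposP _ Kb; rewrite wE; lia.
  by have := aposP _ Kb; rewrite wE; lia.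
- by move=> a b; rewrite raddfD raddf_sum /= big1 ?addr0.
- by move=> b c; rewrite raddfD raddf_sum /= big1 ?addr0.
move=> b Kb; rewrite uE mk3_o1 /fix_at; case: ifP => [empty_b|].
  by have [aa' cc'] := distinct _ empty_b; rewrite swap_move_at // (eqP (andP empty_b).2).
by rewrite /empty Kb /= ffunE addr0 lt_def x_ge0 andbT => /negbT.
Qed.

Lemma zbar_lbound m (ii jj : 'I_m -> 'I_S) s st w :
  - ind (w \in W2 ii jj s st) <= zbar ii jj s st w.
Proof.
have sum_eE (W : {set path S}) : (\sum_(v in W) e v) w = ind (w \in W).
  rewrite sum_ffunE; under eq_bigr do rewrite ffunE.
  have := sum_ind_at W xpredT w; rewrite andbT => <-.
  by apply: eq_bigr => v _; rewrite eq_sym.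
by rewrite !ffunE !sum_eE -[X in X <= _]add0r lerD2r.
Qed.

Lemma zbar_step (B : table S -> Prop) x m (ii jj : 'I_m -> 'I_S) :
  (forall z, crossing_move z -> B z) -> (forall z, zbar_move z -> B z) ->
  (2 <= m)%N -> injective ii -> injective jj -> (forall w, 0 <= x w) ->
  (forall l, 0 < mass (back (ii l) (jj l)) x) ->
  (forall l, 0 < mass (front (ii (nxt l)) (jj l)) x) ->
  exists u, [/\ walk B x u, forall w, 0 <= u w, stat u = stat x &
    forall a b, mass (front a b) u = mass (front a b) x + cycle_matrix ii jj a b].
Proof.
move=> crossingB zbarB m_ge2 ii_inj jj_inj x_ge0 back_gt0 front_gt0.
have through_gt0 b : b \in Iset ii :|: Jset jj -> 0 < mass (through b) x.
  rewrite inE => /orP[/imsetP[l _ ->]|/imsetP[l _ ->]].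
    by apply: lt_le_trans (back_gt0 l) (mass_subset x_ge0 _) => w /andP[].
  by apply: lt_le_trans (front_gt0 l) (mass_subset x_ge0 _) => w /andP[].
have /fin_all_exists[s sP] b : exists a, 0 < mass (through b) x -> 0 < mass (front a b) x.
  case: (boolP (0 < mass (through b) x)) => [|_]; last by exists b.
  by rewrite -sum_front_col => /sum_gt0P[a]; exists a.
have /fin_all_exists[st stP] b : exists c, 0 < mass (through b) x -> 0 < mass (back b c) x.
  case: (boolP (0 < mass (through b) x)) => [|_]; last by exists b.
  by rewrite -sum_back_row => /sum_gt0P[c]; exists c.
have front_pa b : b \in Iset ii :|: Jset jj ->
    0 < mass (front (zfront ii jj s (@nxt m) b) b) x.
  move=> Kb; rewrite /zfront; case: locateP => [l ->|_]; first exact: front_gt0.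
  exact/sP/through_gt0.
have back_pc b : b \in Iset ii :|: Jset jj ->
    0 < mass (back b (zback ii jj st (fun l => l) b)) x.
  move=> Kb; rewrite /zback; case: locateP => [l ->|_]; first exact: back_gt0.
  exact/stP/through_gt0.
have [u [u_ge0 front_u back_u u_gt0]] := swaps_make_positive x_ge0 front_pa back_pc.
have zbarB' : B (zbar ii jj s st).
  apply: zbarB; exists m, ii, jj, s, st; split=> //.
  by have := leq_card _ ii_inj; rewrite !card_ord.
have uz_ge0 w : 0 <= (u + zbar ii jj s st) w.
  rewrite ffunE; apply: le_trans (lerD (lexx (u w)) (zbar_lbound _ _ _ _ w)).
  case: (boolP (w \in W2 ii jj s st)) => [|_]; last by rewrite subr0.
  by rewrite W2E // => /imsetP[b Kb ->]; rewrite subr_ge0; exact: u_gt0.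
exists (u + zbar ii jj s st); split=> //.
- apply: walk_trans (walk_move zbarB' u_ge0 uz_ge0).
  by apply: crossing_walk => // [a b|b c]; rewrite ?front_u ?back_u.
- by rewrite stat_addr_move; [exact: stat_eq_margins | exact: zbar_is_move].
- by move=> a b; rewrite raddfD /= front_u mass_front_zbar.
Qed.

Definition front_dist x y : int :=
  \sum_a \sum_b `|mass (front a b) y - mass (front a b) x|.

Lemma walk_of_stat_eq (B : table S -> Prop) x y :
  (forall z, crossing_move z -> B z) -> (forall z, zbar_move z -> B z) ->
  (forall w, 0 <= x w) -> (forall w, 0 <= y w) -> stat x = stat y -> walk B x y.
Proof.
move=> crossingB zbarB + y_ge0; move: x.
apply: (nonneg_measure_ind (f := front_dist^~ y)) => [x|x IH x_ge0 stat_xy].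
  by apply: sumr_ge0 => a _; apply: sumr_ge0.
have [row0 col0 back_front] := move_front_margins ((stat_eq_move x y).1 stat_xy).
set D := fun a b => mass (front a b) (y - x) in row0 col0 back_front.
have DE a b : D a b = mass (front a b) y - mass (front a b) x by rewrite /D raddfB.
case: (pickP (fun ab : 'I_S * 'I_S => D ab.1 ab.2 != 0)) => [[p q] /= Dpq|D0]; last first.
  have {}D0 a b : D a b = 0 by apply/eqP/negbFE/(D0 (a, b)).
  apply: crossing_walk => // [a b|b c]; apply/eqP; rewrite eq_sym -subr_eq0.
    by rewrite -raddfB /= -/(D a b) D0.
  by rewrite -raddfB /= back_front -/(D b c) D0 oppr0.
have [a0 [b0 D0_gt0]] : exists a0 b0, 0 < D a0 b0.
  case: (ltrgtP (D p q) 0) Dpq => // [Dpq_lt0|Dpq_gt0] _; last by exists p, q.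
  case: (@sum_eq0_neg _ _ (fun b => - D p b) q) => [||q' Dq'].
  - by rewrite sumrN row0 oppr0.
  - by rewrite oppr_gt0.
  - by exists p, q'; rewrite -oppr_lt0.
have [m [ii [jj [m_ge2 ii_inj jj_inj D_gt0 D_lt0]]]] := alternating_cycle row0 col0 D0_gt0.
have back_gt0 l : 0 < mass (back (ii l) (jj l)) x.
  have := back_front (ii l) (jj l); rewrite raddfB /=.
  have := D_gt0 l; have := mass_ge0 (back (ii l) (jj l)) y_ge0; lia.
have front_gt0 l : 0 < mass (front (ii (nxt l)) (jj l)) x.
  have := D_lt0 l; rewrite /D /nxt raddfB /=.
  have := mass_ge0 (front (ii (ordS l)) (jj l)) y_ge0; lia.
have [u [walk_xu u_ge0 stat_u front_u]] :=
  zbar_step crossingB zbarB m_ge2 ii_inj jj_inj x_ge0 back_gt0 front_gt0.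
apply: walk_trans walk_xu (IH u _ u_ge0 _); last by rewrite stat_u.
have Du a b : mass (front a b) y - mass (front a b) u = D a b - cycle_matrix ii jj a b.
  by rewrite front_u DE opprD addrA.
have l0 : 'I_m := Ordinal (ltnW m_ge2).
apply: (ltr_sum_at (i0 := ii l0)) => [a _|//|].
  by apply: ler_sum => b _; rewrite Du -DE; exact: cycle_matrix_le D_lt0.
apply: (ltr_sum_at (i0 := jj l0)) => [b _|//|].
  by rewrite Du -DE; exact: cycle_matrix_le D_lt0.
rewrite Du -DE cycle_matrix_at //; have := D_gt0 l0; rewrite /D.
by move: (mass _ _) => d d_gt0; rewrite !ger0_norm; lia.
Qed.

End Tables.

Theorem proposition2 (S : nat) : (2 <= S)%N ->
  markov_basis (fun z : table S => crossing_move z \/ zbar_move z).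
Proof.
move=> _; split.
  move=> z [|[m [ii [jj [s [st [_ [_ [ii_inj [jj_inj ->]]]]]]]]]].
    exact: crossing_is_move.
  exact: zbar_is_move.
move=> b x y [x_ge0 <-] [y_ge0 stat_y].
by apply: walk_of_stat_eq x_ge0 y_ge0 (esym stat_y) => z Bz; [left | right].
Qed.
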